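(* Let $\mathcal A$ be a toric arrangement in $T$, $X=X_\Delta$ a good toric variety for $\mathcal A$, $B=H^*(X,\mathbb Z)$, and $G\in\mathcal L'$. Let $I\subseteq B$ be the kernel of the restriction map $H^*(X,\mathbb Z)\to H^*(G,\mathbb Z)$. Let $P_G(t)\in B[t]$ be a good lifting of the Chern polynomial of the normal bundle $N_GX$. Then the ideal $(tI,\,P_G(-t))\subseteq B[t]$ does not depend on the choice of the good lifting $P_G(t)$.
   Context: $T$ is a complex algebraic torus with character lattice $X^*(T)$; a layer is $\mathcal K_{\Gamma,\phi}=\{t\in T: x_\chi(t)=\phi(\chi)\ \forall\chi\in\Gamma\}$ with $\Gamma$ a split direct summand of $X^*(T)$ and $\phi:\Gamma\to\mathbb C^*$ a homomorphism; a toric arrangement $\mathcal A$ is a finite set of layers. A good toric variety for $\mathcal A$ is a smooth projective toric variety $X_\Delta$ such that for each layer which is a connected component of an intersection of layers of $\mathcal A$, the lattice $\Gamma$ has an integral basis $\chi_1,\dots,\chi_s$ which, for every cone of $\Delta$ with ray generators $r_1,\dots,r_h$ and after changing signs of some $\chi_i$, has all pairings $\langle\chi_i,r_j\rangle\ge0$ or all $\le0$. $\mathcal L'$ is the set of connected components of intersections of closures in $X$ of layers of $\mathcal A$. For $G\in\mathcal L'$ of codimension $d$, a polynomial $P_G(t)\in B[t]$ is a good lifting of the Chern polynomial of $N_GX$ if (1) $P_G(0)$ is the cohomology class dual to the homology class of $G$, and (2) its image in $H^*(G,\mathbb Z)[t]$ under restriction of coefficients is $t^d+c_1(N_GX)t^{d-1}+\dots+c_d(N_GX)$.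 *)

(* Algebraic abstraction of the geometric setting:
   B = H^*(X,Z), HG = H^*(G,Z), rho : B -> HG the restriction map. *)
From HB Require Import structures.
From mathcomp Require Import all_boot all_order all_algebra.
Set Implicit Arguments. Unset Strict Implicit. Unset Printing Implicit Defensive.
Import GRing.Theory.
Local Open Scope ring_scope.

Definition ker_pred (B HG : comNzRingType) (rho : {rmorphism B -> HG}) : pred B :=
  [pred b | rho b == 0].

Definition chern_poly (HG : comNzRingType) (d : nat) (cs : nat -> HG) : {poly HG} :=
  'X^d + \sum_(1 <= i < d.+1) (cs i)%:P * 'X^(d - i).

(* Good lifting P of the Chern polynomial of N_G X, where gclass is the class
   in B dual to the homology class of G. *)
Definition good_lifting (B HG : comNzRingType) (rho : {rmorphism B -> HG})
    (gclass : B) (d : nat) (cs : nat -> HG) (P : {poly B}) : Prop :=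
  P.[0] = gclass /\ map_poly rho P = chern_poly d cs.

Definition in_ideal_tI_P (B : comNzRingType) (I : pred B) (P : {poly B})
    (f : {poly B}) : Prop :=
  exists (n : nat) (r : 'I_n -> {poly B}) (a : 'I_n -> B) (s : {poly B}),
    (forall i, a i \in I) /\
    f = \sum_(i < n) r i * ('X * (a i)%:P) + s * (P \Po (- 'X)).

(* Two good liftings P and Q agree at 0 and modulo the kernel I of the
   restriction map, so D = Q - P has zero constant term and all its
   coefficients in I.  Hence D(-t) is a B[t]-combination of the t * a with
   a in I, and Q(-t) = P(-t) + D(-t) lies in (tI, P(-t)); by symmetry the two
   ideals coincide. *)
From HB Require Import structures.
From mathcomp Require Import all_boot all_order all_algebra.
From mathcomp Require Import ring.
Set Implicit Arguments. Unset Strict Implicit. Unset Printing Implicit Defensive.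
Import GRing.Theory.
Local Open Scope ring_scope.

Section IdealTIP.

Variables (B : comNzRingType) (I : pred B) (P : {poly B}).

Local Notation mem_ideal := (in_ideal_tI_P I P).

Lemma in_ideal_tI_P0 : mem_ideal 0.
Proof.
exists 0%N, (fun _ => 0), (fun _ => 0), 0.
by split=> [[]|] //; rewrite big_ord0 mul0r addr0.
Qed.

Lemma in_ideal_tI_P_tI (a : B) : a \in I -> mem_ideal ('X * a%:P).
Proof.
move=> Ia; exists 1%N, (fun _ => 1), (fun _ => a), 0.
by split=> //; rewrite big_ord1 mul1r mul0r addr0.
Qed.

Lemma in_ideal_tI_P_comp : mem_ideal (P \Po - 'X).
Proof.
exists 0%N, (fun _ => 0), (fun _ => 0), 1.
by split=> [[]|] //; rewrite big_ord0 mul1r add0r.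
Qed.

Lemma in_ideal_tI_PD (f g : {poly B}) :
  mem_ideal f -> mem_ideal g -> mem_ideal (f + g).
Proof.
move=> [n [r [a [s [Ia ->]]]]] [m [r' [a' [s' [Ia' ->]]]]].
exists (n + m)%N, (fun i => match split i with inl k => r k | inr k => r' k end),
  (fun i => match split i with inl k => a k | inr k => a' k end), (s + s').
split; first by move=> i; case: (split i).
have splitl (i : 'I_n) : split (lshift m i) = inl i := unsplitK (inl i).
have splitr (i : 'I_m) : split (rshift n i) = inr i := unsplitK (inr i).
rewrite big_split_ord /=.
under [X in _ = X + _ + _]eq_bigr => i _ do rewrite splitl.
under [X in _ = _ + X + _]eq_bigr => i _ do rewrite splitr.
by rewrite mulrDl; ring.
Qed.

Lemma in_ideal_tI_PMl (g f : {poly B}) : mem_ideal f -> mem_ideal (g * f).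
Proof.
move=> [n [r [a [s [Ia ->]]]]].
exists n, (fun i => g * r i), a, (g * s); split=> //.
by rewrite mulrDr mulr_sumr mulrA; under eq_bigr => i _ do rewrite mulrA.
Qed.

Lemma in_ideal_tI_P_sum n (F : 'I_n -> {poly B}) :
  (forall i, mem_ideal (F i)) -> mem_ideal (\sum_(i < n) F i).
Proof.
move=> memF; apply: (big_ind mem_ideal) => //.
- exact: in_ideal_tI_P0.
- exact: in_ideal_tI_PD.
Qed.

(* With D`_0 = 0, D(-t) = \sum_i (-1)^(i+1) t^i * (t * D_(i+1)). *)
Lemma in_ideal_tI_P_compN (D : {poly B}) :
  D`_0 = 0 -> (forall k, D`_k \in I) -> mem_ideal (D \Po - 'X).
Proof.
move=> D0 DI; rewrite comp_polyE; case: (size D) => [|m].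
  by rewrite big_ord0; apply: in_ideal_tI_P0.
rewrite big_ord_recl D0 scale0r add0r; apply: in_ideal_tI_P_sum => i.
have -> : D`_(lift ord0 i) *: (- 'X) ^+ lift ord0 i
          = ((-1) ^+ i.+1 * 'X ^+ i) * ('X * (D`_i.+1)%:P).
  by rewrite -mul_polyC [(- 'X) ^+ _]exprNn !exprS /=; ring.
exact/in_ideal_tI_PMl/in_ideal_tI_P_tI.
Qed.

End IdealTIP.

Lemma in_ideal_tI_P_sub (B : comNzRingType) (I : pred B) (P Q f : {poly B}) :
  in_ideal_tI_P I P (Q \Po - 'X) ->
  in_ideal_tI_P I Q f -> in_ideal_tI_P I P f.
Proof.
move=> memQ [n [r [a [s [Ia ->]]]]].
apply: in_ideal_tI_PD; last exact: in_ideal_tI_PMl.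
by apply: in_ideal_tI_P_sum => i; apply/in_ideal_tI_PMl/in_ideal_tI_P_tI.
Qed.

Lemma good_lifting_subP (B HG : comNzRingType) (rho : {rmorphism B -> HG})
    (gclass : B) (d : nat) (cs : nat -> HG) (P Q : {poly B}) :
  good_lifting rho gclass d cs P -> good_lifting rho gclass d cs Q ->
  (Q - P)`_0 = 0 /\ forall k, (Q - P)`_k \in ker_pred rho.
Proof.
move=> [P0 Pm] [Q0 Qm]; split.
  by rewrite coefB -!horner_coef0 P0 Q0 subrr.
by move=> k; rewrite inE /= -coef_map rmorphB /= Pm Qm subrr coef0.
Qed.

Lemma good_lifting_ideal_sub (B HG : comNzRingType) (rho : {rmorphism B -> HG})
    (gclass : B) (d : nat) (cs : nat -> HG) (P Q f : {poly B}) :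
  good_lifting rho gclass d cs P -> good_lifting rho gclass d cs Q ->
  in_ideal_tI_P (ker_pred rho) Q f -> in_ideal_tI_P (ker_pred rho) P f.
Proof.
move=> goodP goodQ; apply: in_ideal_tI_P_sub.
have [D0 DI] := good_lifting_subP goodP goodQ.
rewrite -[Q](subrK P) comp_polyD addrC.
exact/in_ideal_tI_PD/in_ideal_tI_P_compN/DI/D0/in_ideal_tI_P_comp.
Qed.

Theorem mainTheorem8 (B HG : comNzRingType) (rho : {rmorphism B -> HG})
    (gclass : B) (d : nat) (cs : nat -> HG) (P Q : {poly B}) :
  good_lifting rho gclass d cs P ->
  good_lifting rho gclass d cs Q ->
  forall f : {poly B},
    in_ideal_tI_P (ker_pred rho) P f <-> in_ideal_tI_P (ker_pred rho) Q f.
Proof.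
move=> goodP goodQ f; split.
  exact: good_lifting_ideal_sub goodQ goodP.
exact: good_lifting_ideal_sub goodP goodQ.
Qed.
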